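(* The Doob--Martin kernel of $(U_n)_{n \in \mathbb{N}_0}$ with reference state the empty word satisfies, for all $m,n\in\mathbb{N}_0$, $v \in \mathbb{W}_m$ and $w \in \mathbb{W}_{m+n}$, \[ K(v,w) = \binom{w}{v} \frac{\binom{2m}{m}}{\binom{m+n}{m}^2}. \]
   Context: For $n \in \mathbb{N}_0$, $\mathbb{W}_n$ denotes the set of words over the alphabet $\{a,b\}$ with exactly $n$ letters $a$ and $n$ letters $b$, and $\mathbb{W} := \bigsqcup_{n} \mathbb{W}_n$. For words $w,v$, $\binom{w}{v}$ denotes the number of occurrences of $v$ as a (not necessarily contiguous) sub-word of $w$. The Markov chain $(U_n)_{n\in\mathbb{N}_0}$ on $\mathbb{W}$ starts at the empty word $\emptyset$; given $U_n \in \mathbb{W}_n$, first a letter $a$ is inserted uniformly at random into one of the $2n+1$ slots of $U_n$, then a letter $b$ is inserted uniformly at random into one of the $2n+2$ slots of the resulting word, giving $U_{n+1}$. The Doob--Martin kernel with reference state $\emptyset$ is $K(v,w) := \mathbb{P}^v\{\text{the chain hits } w\}/\mathbb{P}^\emptyset\{\text{the chain hits } w\}$; for $v\in\mathbb{W}_m$, $w\in\mathbb{W}_{m+n}$ this equals $\mathbb{P}\{U_{m+n}=w\mid U_m=v\}/\mathbb{P}\{U_{m+n}=w\mid U_0=\emptyset\}$. *)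

From mathcomp Require Import all_boot all_order all_algebra.
Set Implicit Arguments. Unset Strict Implicit. Unset Printing Implicit Defensive.
Import GRing.Theory Num.Theory.
Local Open Scope ring_scope.

Notation la := true.
Notation lb := false.
Definition word := seq bool.

Definition inW (n : nat) (w : word) : bool :=
  (count_mem la w == n) && (count_mem lb w == n).

Definition ins (u : word) (i : nat) (x : bool) : word :=
  take i u ++ x :: drop i u.

(* [subcount w v] = binom(w, v): number of occurrences of v as a
   (not necessarily contiguous) subword of w, i.e. the number of index
   selections (masks) of w that spell v. *)
Definition subcount (w v : word) : nat :=
  #|[set m : (size w).-tuple bool | mask m w == v]|.

(* k-step transition probabilities of the chain: one step from u inserts
   a uniformly into one of the size u + 1 slots, then b uniformly into one
   of the size u + 2 slots of the result. *)
Fixpoint trans (k : nat) (v w : word) : rat :=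
  match k with
  | 0 => (v == w)%:R
  | k'.+1 =>
      \sum_(i < (size v).+1) \sum_(j < (size v).+2)
        trans k' (ins (ins v i la) j lb) w / ((size v).+1 * (size v).+2)%:R
  end.

(* Probability that the chain started at v ever hits w. Since every step
   increases the length by exactly 2, w can only be visited at step
   (size w - size v)/2. *)
Definition hitprob (v w : word) : rat :=
  if (size v <= size w)%N then trans ((size w - size v)./2) v w else 0.

Definition K (v w : word) : rat := hitprob v w / hitprob [::] w.

From mathcomp Require Import all_boot all_order all_algebra.
From mathcomp Require Import zify ring lra.
Import GRing.Theory Num.Theory.

Set Implicit Arguments.
Unset Strict Implicit.
Unset Printing Implicit Defensive.

(* Inserting a letter x into v at each of its size v + 1 slots and counting
   occurrences in w counts every occurrence of v in w once for each letter x
   of w it leaves unused.  Iterating this over the a- and b-insertions shows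
   by induction that n steps lead from v in W_m to w in W_(m+n) with
   probability binom(w, v) n!^2 (2m)! / (2(m+n))!; dividing by the same
   expression for v = [::] and expanding the factorials into binomial
   coefficients gives the kernel. *)

Fixpoint subseq_count (T : eqType) (w v : seq T) : nat :=
  match w with
  | [::] => v == [::]
  | z :: w' =>
      subseq_count w' v + (if v is y :: v' then (z == y) * subseq_count w' v' else 0)
  end.

Lemma big_tupleS (R : Type) (idx : R) (op : Monoid.com_law idx)
    (T : finType) n (F : n.+1.-tuple T -> R) :
  \big[op/idx]_(t : n.+1.-tuple T) F t =
  \big[op/idx]_(x : T) \big[op/idx]_(t : n.-tuple T) F [tuple of x :: t].
Proof.
rewrite pair_bigA (reindex (fun p : T * n.-tuple T => [tuple of p.1 :: p.2])) //.
exists (fun t : n.+1.-tuple T => (thead t, [tuple of behead t])).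
  by move=> [x t] _; congr pair; apply: val_inj.
by move=> t _; rewrite [in RHS](tuple_eta t).
Qed.

Section SubseqCount.

Variable T : eqType.
Implicit Types (w v : seq T) (x : T).

Lemma sum_mask_eq w v :
  \sum_(m : (size w).-tuple bool) (mask m w == v : nat) = subseq_count w v.
Proof.
elim: w v => [|z w IHw] v /=.
  rewrite (big_pred1 [tuple]) /=; first by case: v.
  by move=> t; rewrite [t]tuple0; apply/esym/eqP.
rewrite big_tupleS big_bool /= IHw addnC; congr addn.
case: v => [|y v]; first by rewrite big1.
rewrite -IHw big_distrr; apply: eq_bigr => m _.
by rewrite eqseq_cons; case: (z == y) => /=; rewrite ?mul1n ?mul0n.
Qed.

Lemma subseq_count0 w : subseq_count w [::] = 1.
Proof. by elim: w => //= z w ->; rewrite addn0. Qed.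

Lemma subseq_count1 w x : subseq_count w [:: x] = count_mem x w.
Proof. by elim: w => //= z w ->; rewrite subseq_count0 muln1 addnC eq_sym. Qed.

Lemma subseq_count_gt_size w v : size w < size v -> subseq_count w v = 0.
Proof.
elim: w v => [|z w IHw] [|y v] //= ltwv.
by rewrite IHw ?(IHw v) ?muln0 //=; lia.
Qed.

Lemma subseq_count_eq_size w v : size v = size w -> subseq_count w v = (v == w).
Proof.
elim: w v => [|z w IHw] [|y v] //= [eq_size].
rewrite subseq_count_gt_size /= ?eq_size // IHw // eqseq_cons [y == z]eq_sym.
by case: (z == y); case: (v == w).
Qed.

Lemma sum_subseq_count_insert w v x :
  \sum_(i < (size v).+1) subseq_count w (take i v ++ x :: drop i v)
    + subseq_count w v * count_mem x v
  = subseq_count w v * count_mem x w.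
Proof.
elim: w v => [|z w IHw] v.
  rewrite big1 => [|i _]; last by case: (take _ _).
  by case: v.
case: v => [|y v].
  by rewrite big_ord1 /= subseq_count0 subseq_count1; lia.
have IHv := IHw v; have IHyv := IHw (y :: v).
rewrite /= big_ord_recl /= in IHyv.
rewrite /= big_ord_recl /= big_split /= -big_distrr /=.
set S := \sum_(i < _) subseq_count w (y :: _) in IHyv *.
set S' := \sum_(i < _) subseq_count w (_ ++ _) in IHv *.
have [-> | _] := eqVneq z y; rewrite ?eqxx /=; nia.
Qed.

End SubseqCount.

Lemma subcountE (w v : word) : subcount w v = subseq_count w v.
Proof.
rewrite /subcount -sum1_card -sum_mask_eq big_mkcond.
by apply: eq_bigr => m _; rewrite inE; case: (_ == _).
Qed.

Lemma size_count_letters (s : word) : size s = count_mem la s + count_mem lb s.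
Proof. by elim: s => //= -[] s ->; lia. Qed.

Lemma size_ins (v : word) i x : size (ins v i x) = (size v).+1.
Proof. by rewrite /ins size_cat /= -{3}(cat_take_drop i v) size_cat addnS. Qed.

Lemma count_ins (p : pred bool) (v : word) i x :
  count p (ins v i x) = p x + count p v.
Proof. by rewrite /ins count_cat /= -{3}(cat_take_drop i v) count_cat; lia. Qed.

Lemma sum_subseq_count_ins (w v : word) x k :
  count_mem x w = count_mem x v + k ->
  \sum_(i < (size v).+1) subseq_count w (ins v i x) = subseq_count w v * k.
Proof.
move=> count_w; have := sum_subseq_count_insert w v x.
by rewrite count_w mulnDr addnC => /addnI.
Qed.

Lemma sum_subseq_count_ins2 (w v : word) k l :
  count_mem la w = count_mem la v + k -> count_mem lb w = count_mem lb v + l ->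
  \sum_(i < (size v).+1) \sum_(j < (size v).+2)
    subseq_count w (ins (ins v i la) j lb)
  = subseq_count w v * k * l.
Proof.
move=> count_a count_b.
have inner i : \sum_(j < (size v).+2) subseq_count w (ins (ins v i la) j lb)
               = subseq_count w (ins v i la) * l.
  by rewrite -(size_ins v i la) (@sum_subseq_count_ins _ _ _ l) // count_ins.
under eq_bigr => i _ do rewrite inner.
by rewrite -big_distrl /= (sum_subseq_count_ins count_a).
Qed.

Local Open Scope ring_scope.

Lemma natr_fact_neq0 (R : numDomainType) n : n`!%:R != 0 :> R.
Proof. by rewrite pnatr_eq0 -lt0n fact_gt0. Qed.

Lemma transS k (v w : word) :
  trans k.+1 v w =
  \sum_(i < (size v).+1) \sum_(j < (size v).+2)
    trans k (ins (ins v i la) j lb) w / ((size v).+1 * (size v).+2)%:R.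
Proof. by []. Qed.

Lemma trans_closed_form k (v w : word) :
  count_mem la w = (count_mem la v + k)%N ->
  count_mem lb w = (count_mem lb v + k)%N ->
  trans k v w =
    (subseq_count w v * k`! ^ 2 * (size v)`!)%:R / ((size v + 2 * k)`!)%:R.
Proof.
elim: k v => [|k IHk] v count_a count_b.
  have size_vw : size v = size w.
    by rewrite !size_count_letters count_a count_b !addn0.
  rewrite /= subseq_count_eq_size // fact0 exp1n muln1 addn0 natrM.
  by rewrite mulfK ?natr_fact_neq0.
have step i (j : 'I_(size v).+2) :
    trans k (ins (ins v i la) j lb) w =
    (subseq_count w (ins (ins v i la) j lb))%:R *
      ((k`! ^ 2 * (size v).+2`!)%:R / ((size v + 2 * k.+1)`!)%:R).
  rewrite IHk; last 2 first.
  - by rewrite !count_ins /= count_a add0n add1n addSn addnS.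
  - by rewrite !count_ins /= count_b add0n add1n addSn addnS.
  rewrite !size_ins mulrA -natrM mulnA.
  by have -> : ((size v).+2 + 2 * k = size v + 2 * k.+1)%N by lia.
rewrite transS.
under eq_bigr => i _ do under eq_bigr => j _ do rewrite step -mulrA.
under eq_bigr => i _ do rewrite -big_distrl /= -natr_sum.
rewrite -big_distrl /= -natr_sum (sum_subseq_count_ins2 count_a count_b).
rewrite !factS !natrM; field.
have size_ge0 : 0 <= (size v)%:R :> rat := ler0n _ _.
by apply/and3P; split; [exact: natr_fact_neq0 | apply: lt0r_neq0; lra ..].
Qed.

Lemma size_inW m (v : word) : inW m v -> size v = (2 * m)%N.
Proof.
by case/andP=> /eqP count_a /eqP count_b; rewrite size_count_letters count_a count_b; lia.
Qed.

Lemma hitprob_inW m n (v w : word) : inW m v -> inW (m + n) w ->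
  hitprob v w =
    (subseq_count w v * n`! ^ 2 * (2 * m)`!)%:R / ((2 * (m + n))`!)%:R.
Proof.
move=> v_m w_mn; rewrite /hitprob (size_inW v_m) (size_inW w_mn).
have -> : (2 * m <= 2 * (m + n))%N by lia.
have -> : (2 * (m + n) - 2 * m = n.*2)%N by lia.
rewrite doubleK trans_closed_form; last 2 first.
- by move: v_m w_mn => /andP[/eqP -> _] /andP[/eqP -> _].
- by move: v_m w_mn => /andP[_ /eqP ->] /andP[_ /eqP ->].
rewrite (size_inW v_m).
by have -> : (2 * m + 2 * n = 2 * (m + n))%N by lia.
Qed.

Lemma bin_fact_addn m n : ('C(m + n, m) * (m`! * n`!))%N = (m + n)`!.
Proof. by have := bin_fact (leq_addr n m); rewrite addKn. Qed.

Theorem mainTheorem2 (m n : nat) (v w : word) :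
  inW m v -> inW (m + n) w ->
  K v w = (subcount w v)%:R * ('C(2 * m, m))%:R / (('C(m + n, m) ^ 2)%N)%:R.
Proof.
move=> v_m w_mn.
rewrite /K (hitprob_inW v_m w_mn) (hitprob_inW (m := 0) (erefl : inW 0 [::]) w_mn).
rewrite add0n muln0 fact0 subseq_count0 subcountE.
have -> : (2 * m = m + m)%N by lia.
rewrite -(bin_fact_addn m m) -(bin_fact_addn m n) !natrM.
have bin_neq0 : 'C(m + n, m)%:R != 0 :> rat by rewrite pnatr_eq0 -lt0n bin_gt0 leq_addr.
field.
by rewrite bin_neq0 !natr_fact_neq0.
Qed.
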